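(* Let $1\le p\le\infty$. Fix a positive integer $N$ (bound on the number of intervals) and a real $\lambda>0$ (lower bound on total length). Then persistent entropy is continuous on $(\mathcal{B}_F,d_p)$ restricted to such barcodes: for every $\varepsilon>0$ there exists $\delta>0$ such that for all $A,B\in\mathcal{B}_F$ with at most $N$ intervals each and with total lengths $L_a,L_b\ge\lambda$, $d_p(A,B)\le\delta$ implies $|E(A)-E(B)|\le\varepsilon$.
   Context: A persistence barcode is a finite multiset of intervals $[x,y]$, $x\le y$; $\mathcal{B}_F$ is the set of barcodes all of whose intervals have finite endpoints. For $A=\{[x_i^a,y_i^a]\}_{i=1}^{n_a}$, $\ell_i^a=y_i^a-x_i^a$, $L_a=\sum_i\ell_i^a$. $p$-th Wasserstein distance: pad the smaller barcode with zero-length intervals $[t,t]$ until both have $n_{\max}=\max\{n_a,n_b\}$ intervals; $d_p(A,B)=\big(\min_\gamma\sum_i\max\{|x_i^a-x^b_{\gamma(i)}|^p,|y_i^a-y^b_{\gamma(i)}|^p\}\big)^{1/p}$ for $p<\infty$ and $d_\infty(A,B)=\min_\gamma\max_i\max\{|x_i^a-x^b_{\gamma(i)}|,|y_i^a-y^b_{\gamma(i)}|\}$, minima over bijections $\gamma$ (and paddings). Persistent entropy: $E(A)=-\sum_i\frac{\ell_i^a}{L_a}\log\frac{\ell_i^a}{L_a}$ with $0\log0=0$. *)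

From HB Require Import structures.
From mathcomp Require Import all_boot all_order all_algebra all_fingroup.
From mathcomp Require Import all_classical all_reals all_analysis.
Set Implicit Arguments. Unset Strict Implicit. Unset Printing Implicit Defensive.
Import Order.TTheory GRing.Theory Num.Theory.
Local Open Scope ring_scope.
Local Open Scope classical_set_scope.

Section Barcodes.
Variable R : realType.

(* A barcode in B_F: a finite multiset of intervals [x,y] with finite
   endpoints, represented as a list of endpoint pairs (x, y). *)
Definition barcode := seq (R * R).

Definition wf_barcode (A : barcode) : bool := all (fun I => I.1 <= I.2) A.

Definition ilen (I : R * R) : R := I.2 - I.1.

Definition total_length (A : barcode) : R := \sum_(I <- A) ilen I.

Definition plogp (q : R) : R := if q == 0 then 0 else q * ln q.

Definition pentropy (A : barcode) : R :=
  - \sum_(I <- A) plogp (ilen I / total_length A).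

Definition icost (I J : R * R) : R := Num.max `|I.1 - J.1| `|I.2 - J.2|.

Definition pad (A : barcode) (t : seq R) : barcode := A ++ [seq (x, x) | x <- t].

(* the p-cost of a bijection s between padded barcodes of size n;
   p = +oo gives the bottleneck (max) cost *)
Definition match_cost (p : \bar R) (n : nat) (A B : barcode) (s : 'S_n) : R :=
  let c := fun i : 'I_n => icost (nth (0, 0) A i) (nth (0, 0) B (s i)) in
  match p with
  | r%:E => (\sum_(i < n) c i `^ r) `^ r^-1
  | _ => \big[Num.max/0]_(i < n) c i
  end.

Definition dW (p : \bar R) (A B : barcode) : R :=
  let n := maxn (size A) (size B) in
  inf [set c | exists (ta tb : seq R) (s : 'S_n),
        size ta = (n - size A)%N /\ size tb = (n - size B)%N /\
        c = match_cost p (pad A ta) (pad B tb) s].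

End Barcodes.

(* Entropy only sees interval lengths, and zero-length padding intervals contribute
   nothing to it, so E can be computed on the padded barcodes along a matching.
   A matching of cost below 2 delta changes each length by at most 4 delta, hence
   each total length by at most 4 N delta and, as total lengths are at least
   lambda, each normalised length by O(N delta / lambda).  Since q |-> q ln q is
   1/2-Hoelder on [0, 1] (|q ln q - r ln r| <= 3 sqrt|q - r|), summing over the
   at most N pairs gives |E(A) - E(B)| <= 3 N sqrt(O(N delta / lambda)). *)
From HB Require Import structures.
From mathcomp Require Import all_boot all_order all_algebra all_fingroup.
From mathcomp Require Import all_classical all_reals all_analysis.
From mathcomp Require Import ring lra.
Set Implicit Arguments. Unset Strict Implicit. Unset Printing Implicit Defensive.
Import Order.TTheory GRing.Theory Num.Theory.
Local Open Scope ring_scope.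

Section PlogpHoelder.
Variable R : realType.
Implicit Types a b x : R.

Lemma plogpE x : plogp x = x * ln x.
Proof. by rewrite /plogp; case: eqP => [->|]; rewrite ?mul0r. Qed.

Lemma ler_id_sqrtr x : 0 <= x <= 1 -> x <= Num.sqrt x.
Proof.
case/andP=> x_ge0 x_le1; set s := Num.sqrt x.
have s_ge0 : 0 <= s by rewrite sqrtr_ge0.
have s_le1 : s <= 1 by rewrite -sqrtr1 ler_wsqrtr.
have -> : x = s * s by rewrite -expr2 sqr_sqrtr.
nra.
Qed.

(* Apply ln y < y at y = 1 / sqrt x. *)
Lemma mulr_ln_ge_Nsqrt x : 0 < x -> - (2 * Num.sqrt x) <= x * ln x.
Proof.
move=> x_gt0; set s := Num.sqrt x.
have s_gt0 : 0 < s by rewrite sqrtr_gt0.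
have x_ss : x = s * s by rewrite -expr2 sqr_sqrtr // ltW.
have lnx : ln x = ln s + ln s by rewrite x_ss lnM ?posrE.
have : ln s^-1 < s^-1 by apply: ln_sublinear; rewrite invr_gt0.
rewrite lnV ?posrE // => lnN_lt.
have : s * - ln s <= s * s^-1 by apply: ler_wpM2l; [exact: ltW | exact: ltW].
rewrite mulfV ?gt_eqF // lnx x_ss => slns_le1.
nra.
Qed.

Lemma mulr_ln_div_le a b : 0 < a -> 0 < b -> a * ln (b / a) <= b - a.
Proof.
move=> a_gt0 b_gt0; have ba_gt0 : 0 < b / a by rewrite divr_gt0.
have : ln (1 + (b / a - 1)) <= b / a - 1 by apply: le_ln1Dx; lra.
rewrite addrC subrK => ln_le.
have := ler_wpM2l (ltW a_gt0) ln_le.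
by rewrite mulrBr mulrCA mulfV ?gt_eqF ?mulr1.
Qed.

Lemma dist_plogp_le a b : 0 <= a <= 1 -> 0 <= b <= 1 ->
  `|plogp a - plogp b| <= 3 * Num.sqrt `|a - b|.
Proof.
wlog le_ab : a b / a <= b.
  move=> wlog_ab a01 b01; have [le_ab|/ltW le_ba] := leP a b; first exact: wlog_ab.
  by rewrite distrC (distrC a); apply: wlog_ab.
move=> /andP[a_ge0 a_le1] /andP[b_ge0 b_le1].
rewrite !plogpE distrC (distrC a) (ger0_norm (x := b - a)) ?subr_ge0 //.
set d := b - a; have d01 : 0 <= d <= 1 by rewrite /d; lra.
have d_le_sqrt := ler_id_sqrtr d01.
have sqrt_ge0 : 0 <= Num.sqrt d by rewrite sqrtr_ge0.
have -> : b * ln b - a * ln a = d * ln b + a * (ln b - ln a) by rewrite /d; ring.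
have dlnb : - (2 * Num.sqrt d) <= d * ln b <= 0.
  have [->|d_neq0] := eqVneq d 0; first by rewrite sqrtr0 !mul0r mulr0 oppr0 lexx.
  have d_gt0 : 0 < d by rewrite lt_neqAle eq_sym d_neq0; case/andP: d01.
  rewrite mulr_ge0_le0 ?ln_le0 ?(ltW d_gt0) // andbT.
  have d_le_b : d <= b by rewrite /d; lra.
  have lnd_le : ln d <= ln b by rewrite ler_ln ?posrE // (lt_le_trans d_gt0).
  have := mulr_ln_ge_Nsqrt d_gt0; have := ler_wpM2l (ltW d_gt0) lnd_le; lra.
have alnba : 0 <= a * (ln b - ln a) <= d.
  have [->|a_neq0] := eqVneq a 0; first by rewrite mul0r lexx; case/andP: d01.
  have a_gt0 : 0 < a by rewrite lt_neqAle eq_sym a_neq0.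
  have b_gt0 : 0 < b by exact: lt_le_trans le_ab.
  rewrite mulr_ge0 ?subr_ge0 ?ler_ln ?posrE //= -ln_div ?posrE //.
  exact: mulr_ln_div_le.
rewrite ler_norml; apply/andP; split; lra.
Qed.

End PlogpHoelder.

Section WeightEntropy.
Variable R : realType.

Definition weight_entropy n (a : 'I_n -> R) : R := - \sum_i plogp (a i / \sum_j a j).

Lemma ler_term_sum n (a : 'I_n -> R) i : (forall j, 0 <= a j) -> a i <= \sum_j a j.
Proof. by move=> a_ge0; rewrite (bigD1 i) //= lerDl sumr_ge0. Qed.

Lemma div_sum_itv n (a : 'I_n -> R) i :
  (forall j, 0 <= a j) -> 0 < \sum_j a j -> 0 <= a i / \sum_j a j <= 1.
Proof.
move=> a_ge0 L_gt0.
by rewrite divr_ge0 ?a_ge0 ?(ltW L_gt0) //= ler_pdivrMr // mul1r ler_term_sum.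
Qed.

Variables (n : nat) (a b : 'I_n -> R) (lam e K : R).
Hypotheses (lam_gt0 : 0 < lam) (e_ge0 : 0 <= e) (n_le_K : n%:R <= K).
Hypotheses (a_ge0 : forall i, 0 <= a i) (b_ge0 : forall i, 0 <= b i).
Hypotheses (lam_le_a : lam <= \sum_i a i) (lam_le_b : lam <= \sum_i b i).
Hypothesis dist_ab : forall i, `|a i - b i| <= e.

Lemma dist_sum_le : `|\sum_i a i - \sum_i b i| <= K * e.
Proof.
rewrite -sumrB; apply: le_trans (ler_norm_sum _ _ _) _.
apply: le_trans (ler_sum _ (fun i _ => dist_ab i)) _.
by rewrite sumr_const card_ord -mulr_natl ler_wpM2r.
Qed.

Lemma dist_div_sum_le i :
  `|a i / \sum_j a j - b i / \sum_j b j| <= (1 + K) * e / lam.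
Proof.
set La := \sum_j a j; set Lb := \sum_j b j.
have La_gt0 : 0 < La by exact: lt_le_trans lam_le_a.
have Lb_gt0 : 0 < Lb by exact: lt_le_trans lam_le_b.
have inv_le : La^-1 <= lam^-1 by rewrite lef_pV2 ?posrE.
have -> : a i / La - b i / Lb = (a i - b i) / La + b i / Lb * ((Lb - La) / La).
  by field; rewrite !gt_eqF.
apply: le_trans (ler_normD _ _) _.
have La_inv_ge0 : 0 <= La^-1 by rewrite invr_ge0 ltW.
rewrite 2![in X in _ <= X]mulrDl mul1r; apply: lerD.
  by rewrite normrM normfV (gtr0_norm La_gt0) ler_pM ?dist_ab.
have /andP[q_ge0 q_le1] := div_sum_itv i b_ge0 Lb_gt0.
rewrite -[X in _ <= X]mul1r normrM (ger0_norm q_ge0) ler_pM //.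
by rewrite normrM normfV (gtr0_norm La_gt0) distrC ler_pM ?dist_sum_le.
Qed.

Lemma dist_weight_entropy_le :
  `|weight_entropy a - weight_entropy b| <= K * (3 * Num.sqrt ((1 + K) * e / lam)).
Proof.
have La_gt0 : 0 < \sum_j a j by exact: lt_le_trans lam_le_a.
have Lb_gt0 : 0 < \sum_j b j by exact: lt_le_trans lam_le_b.
rewrite /weight_entropy -opprD normrN -sumrB.
apply: le_trans (ler_norm_sum _ _ _) _.
apply: (@le_trans _ _ (\sum_(i < n) 3 * Num.sqrt ((1 + K) * e / lam))).
  apply: ler_sum => i _.
  apply: le_trans (dist_plogp_le (div_sum_itv i a_ge0 La_gt0)
                                 (div_sum_itv i b_ge0 Lb_gt0)) _.
  by rewrite ler_wpM2l // ler_wsqrtr // dist_div_sum_le.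
by rewrite sumr_const card_ord -[_ *+ n]mulr_natl ler_wpM2r ?mulr_ge0.
Qed.

End WeightEntropy.

Section Matchings.
Variable R : realType.
Implicit Types (A B : barcode R) (I J : R * R).

Lemma ilen_ge0 A I : wf_barcode A -> I \in A -> 0 <= ilen I.
Proof. by move=> /allP wfA /wfA; rewrite subr_ge0. Qed.

Lemma size_pad A t : size (pad A t) = (size A + size t)%N.
Proof. by rewrite /pad size_cat size_map. Qed.

Lemma wf_pad A t : wf_barcode A -> wf_barcode (pad A t).
Proof.
by rewrite /wf_barcode /pad all_cat => ->; rewrite all_map; apply/allP => x _ /=.
Qed.

Lemma sum_pad_perm A t n (s : 'S_n) (F : R * R -> R) :
  (forall x, F (x, x) = 0) -> size (pad A t) = n ->
  \sum_(I <- A) F I = \sum_(i < n) F (nth (0, 0) (pad A t) (s i)).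
Proof.
move=> F0 szA; have pad0 : \sum_(x <- t) F (x, x) = 0 by apply: big1 => x _.
have -> : \sum_(I <- A) F I = \sum_(I <- pad A t) F I.
  by rewrite /pad big_cat big_map /= pad0 addr0.
by rewrite (big_nth (0, 0)) szA big_mkord (reindex_inj (@perm_inj _ s)).
Qed.

Lemma total_length_pad_perm A t n (s : 'S_n) : size (pad A t) = n ->
  total_length A = \sum_(i < n) ilen (nth (0, 0) (pad A t) (s i)).
Proof. by apply: sum_pad_perm => x; rewrite /ilen subrr. Qed.

Lemma pentropy_pad_perm A t n (s : 'S_n) : size (pad A t) = n ->
  pentropy A = weight_entropy (fun i => ilen (nth (0, 0) (pad A t) (s i))).
Proof.
move=> szA; rewrite /pentropy /weight_entropy -(total_length_pad_perm s szA).
by congr (- _); apply: sum_pad_perm => // x; rewrite /ilen subrr mul0r plogpE mul0r.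
Qed.

Lemma dist_ilen_le I J : `|ilen I - ilen J| <= 2 * icost I J.
Proof.
have cost1 : `|I.1 - J.1| <= icost I J by rewrite le_max lexx.
have cost2 : `|I.2 - J.2| <= icost I J by rewrite le_max lexx orbT.
have -> : ilen I - ilen J = (I.2 - J.2) - (I.1 - J.1) by rewrite /ilen; ring.
by apply: le_trans (ler_normB _ _) _; lra.
Qed.

Lemma icost_le_match_cost (p : \bar R) n A B (s : 'S_n) (i : 'I_n) : (1 <= p)%E ->
  icost (nth (0, 0) A i) (nth (0, 0) B (s i)) <= match_cost p A B s.
Proof.
pose c (j : 'I_n) := icost (nth (0, 0) A j) (nth (0, 0) B (s j)).
have c_ge0 j : 0 <= c j by rewrite le_max normr_ge0.
case: p => [r| |] //= r_ge1; last exact: le_bigmax_seq (mem_index_enum i) _.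
have r_gt0 : 0 < r by rewrite lee_fin in r_ge1; lra.
change (c i <= (\sum_j c j `^ r) `^ r^-1).
have -> : c i = (c i `^ r) `^ r^-1.
  by rewrite -powRrM mulfV ?gt_eqF // powRr1.
apply: ge0_ler_powR; rewrite ?invr_ge0 ?(ltW r_gt0) ?nnegrE ?powR_ge0 ?sumr_ge0 //.
  by move=> j _; rewrite powR_ge0.
by apply: ler_term_sum => j; rewrite powR_ge0.
Qed.

Lemma dW_gt_match_cost (p : \bar R) A B c : dW p A B < c ->
  let n := maxn (size A) (size B) in
  exists ta tb (s : 'S_n), [/\ size (pad A ta) = n, size (pad B tb) = n
                             & match_cost p (pad A ta) (pad B tb) s < c].
Proof.
move=> dW_lt n; rewrite /dW -/n in dW_lt; set S := (X in inf X) in dW_lt.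
have S_neq0 : (S !=set0)%classic.
  pose ta := nseq (n - size A) (0 : R); pose tb := nseq (n - size B) (0 : R).
  exists (match_cost p (pad A ta) (pad B tb) (1%g : 'S_n)).
  by exists ta, tb, 1%g; rewrite !size_nseq.
have [_ [ta [tb [s [szA [szB ->]]]]] cost_lt] := inf_lt S_neq0 dW_lt.
by exists ta, tb, s; rewrite !size_pad szA szB !subnKC ?leq_maxl ?leq_maxr.
Qed.

End Matchings.

Theorem proposition2 (R : realType) (p : \bar R) (hp : (1 <= p)%E)
  (N : nat) (hN : (0 < N)%N) (lam : R) (hlam : 0 < lam) :
  forall eps : R, 0 < eps ->
  exists2 delta : R, 0 < delta &
    forall A B : barcode R,
      wf_barcode A -> wf_barcode B ->
      (size A <= N)%N -> (size B <= N)%N ->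
      lam <= total_length A -> lam <= total_length B ->
      dW p A B <= delta -> `|pentropy A - pentropy B| <= eps.
Proof.
move=> eps eps_gt0; pose K : R := N%:R; pose X := eps / (3 * K).
have K_gt0 : 0 < K by rewrite ltr0n.
have X_gt0 : 0 < X by rewrite divr_gt0 ?mulr_gt0.
pose delta := lam * X ^+ 2 / (4 * (1 + K)).
have delta_gt0 : 0 < delta.
  by apply: divr_gt0; [rewrite mulr_gt0 // exprn_gt0 | lra].
exists delta => // A B wfA wfB szA szB lamA lamB dAB.
have [|ta [tb [s [szA' szB' cost_lt]]]] := @dW_gt_match_cost _ p A B (2 * delta).
  by apply: le_lt_trans dAB _; lra.
rewrite (pentropy_pad_perm 1%g szA') (pentropy_pad_perm s szB').
apply: le_trans
  (@dist_weight_entropy_le _ _ _ _ lam (4 * delta) K hlam _ _ _ _ _ _ _) _.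
- by rewrite mulr_ge0 // ltW.
- by rewrite ler_nat geq_max szA szB.
- by move=> i; apply: ilen_ge0 (wf_pad ta wfA) (mem_nth _ _); rewrite szA'.
- by move=> i; apply: ilen_ge0 (wf_pad tb wfB) (mem_nth _ _); rewrite szB'.
- by rewrite -total_length_pad_perm.
- by rewrite -total_length_pad_perm.
- move=> i; rewrite perm1; apply: le_trans (dist_ilen_le _ _) _.
  have := le_lt_trans (icost_le_match_cost _ _ _ i hp) cost_lt; lra.
have -> : (1 + K) * (4 * delta) / lam = X ^+ 2.
  by rewrite /delta; field; rewrite !gt_eqF // -/K; lra.
rewrite sqrtr_sqr gtr0_norm //.
by have -> : K * (3 * X) = eps by rewrite /X; field; rewrite gt_eqF.
Qed.
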